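(* Let $G$ be an abelian group and let $(V,Y,\mathbf 1,\omega)$ be a simple vertex operator algebra graded by $G$, $V=\bigoplus_{g\in G}V^g$, such that $V^g\neq 0$ for all $g\in G$ and the fusion rules of the $V^0$-modules $V^g$ satisfy $N_{V^g,V^h}^{V^k}=\delta_{g+h,k}$ for all $g,h,k\in G$. Suppose $(V,\bar Y,\mathbf 1,\omega)$ is also a simple vertex operator algebra on the same underlying vector space, with the same vacuum and Virasoro vector, such that $\bar Y(u,z)=Y(u,z)$ for all $u\in V^0$. Then $(V,Y,\mathbf 1,\omega)$ and $(V,\bar Y,\mathbf 1,\omega)$ are isomorphic vertex operator algebras.
   Context: A vertex operator algebra $V$ is graded by an abelian group $G$ if $V=\bigoplus_{g\in G}V^g$ with $u_nv\in V^{g+h}$ for all $u\in V^g$, $v\in V^h$, $n\in\mathbb Z$ (where $Y(u,z)=\sum_n u_nz^{-n-1}$); then $V^0$ is a vertex operator subalgebra and each $V^g$ is a $V^0$-module. For weak modules $W_1,W_2,W_3$ of a vertex operator algebra $U$, an intertwining operator of type $\binom{W_3}{W_1\,W_2}$ is a linear map $I:W_1\to(\mathrm{Hom}(W_2,W_3))\{z\}$, $w\mapsto I(w,z)$ (formal series with complex powers of $z$), such that $I(w_1,z)w_2\in W_3\{z\}$, $[L(-1),I(w_1,z)]=\frac{d}{dz}I(w_1,z)$, and the Jacobi identity $z_0^{-1}\delta\!\left(\frac{z_1-z_2}{z_0}\right)Y(v,z_1)I(w_1,z_2)-z_0^{-1}\delta\!\left(\frac{z_2-z_1}{-z_0}\right)I(w_1,z_2)Y(v,z_1)=z_2^{-1}\delta\!\left(\frac{z_1-z_0}{z_2}\right)I(Y(v,z_0)w_1,z_2)$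 holds for $v\in U$. The fusion rule $N_{W_1,W_2}^{W_3}$ is the dimension of the space of such intertwining operators. *)

From HB Require Import structures.
From mathcomp Require Import all_boot all_order all_algebra.
From mathcomp Require Import complex.
From mathcomp Require Import Rstruct.
From Stdlib Require Rdefinitions.

Set Implicit Arguments.
Unset Strict Implicit.
Unset Printing Implicit Defensive.

Import Order.TTheory GRing.Theory Num.Theory.
Local Open Scope ring_scope.

Definition C : Type := complex Rdefinitions.R.
HB.instance Definition _ := GRing.Field.on C.

Section VOA.
Variable V : lmodType C.

(* Vertex operators are encoded by their modes:
   Y u n v = u_n v, where Y(u,z) = \sum_{n in Z} u_n z^{-n-1}. *)

Definition gbinom (m : int) (i : nat) : C :=
  (\prod_(j < i) (m%:~R - (j%:R : C))) / (i`!)%:R.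

(* Equality of two formal infinite sums \sum_{i>=0} f i = \sum_{i>=0} g i
   whose terms are eventually zero (all the sums occurring in the componentwise
   Jacobi identities below are of this kind): the partial sums eventually
   agree. *)
Definition series_eq (f g : nat -> V) : Prop :=
  exists N : nat, forall K : nat, (N <= K)%N ->
    \sum_(i < K) f i = \sum_(i < K) g i.

Definition subspace (P : V -> Prop) : Prop :=
  P 0 /\ (forall (a : C) (u v : V), P u -> P v -> P (a *: u + v)).

Definition fin_dim (P : V -> Prop) : Prop :=
  subspace P /\
  exists s : seq V, (forall i, (i < size s)%N -> P (nth 0 s i)) /\
    forall v, P v -> exists c : 'I_(size s) -> C,
      v = \sum_(i < size s) c i *: nth 0 s i.

Definition is_VOA (Y : V -> int -> V -> V) (one omega : V) : Prop :=
  let L := fun (m : int) (v : V) => Y omega (m + 1) v in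
  (forall (a : C) u u' n v, Y (a *: u + u') n v = a *: Y u n v + Y u' n v) /\
  (forall (a : C) u n v v', Y u n (a *: v + v') = a *: Y u n v + Y u n v') /\
  (forall u v, exists N : int, forall n, N <= n -> Y u n v = 0) /\
  (forall n v, Y one n v = if n == (-1)%R then v else 0) /\
  (forall v, (forall n : int, 0 <= n -> Y v n one = 0) /\ Y v (-1) one = v) /\
  (* Jacobi identity, componentwise *)
  (forall u v w (m n k : int),
      series_eq
        (fun i => gbinom m i *: Y (Y u (n + i%:Z) v) (m + k - i%:Z) w)
        (fun i => ((-1) ^+ i * gbinom n i) *:
           (Y u (m + n - i%:Z) (Y v (k + i%:Z) w)
            - ((-1 : C) ^ n) *: Y v (n + k - i%:Z) (Y u (m + i%:Z) w)))) /\
  (exists c : C, forall (m n : int) v,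
      L m (L n v) - L n (L m v)
      = (m - n)%:~R *: L (m + n) v
        + ((if m + n == 0 then ((m ^+ 3 - m)%:~R / 12%:R) * c else 0) *: v)) /\
  (* L(-1)-derivative property: Y(L(-1)v, z) = d/dz Y(v, z) *)
  (forall v (n : int) w, Y (L (-1) v) n w = - (n%:~R) *: Y v (n - 1) w) /\
  (forall v, exists (s : seq int) (f : int -> V),
      (forall n, L 0 (f n) = n%:~R *: f n) /\ v = \sum_(n <- s) f n) /\
  (forall n : int, fin_dim (fun v => L 0 v = n%:~R *: v)) /\
  (exists N : int, forall n : int, n < N ->
      forall v, L 0 v = n%:~R *: v -> v = 0).

Definition is_ideal (Y : V -> int -> V -> V) (P : V -> Prop) : Prop :=
  subspace P /\ forall u w n, P w -> P (Y u n w) /\ P (Y w n u).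

Definition simple_VOA (Y : V -> int -> V -> V) (one omega : V) : Prop :=
  is_VOA Y one omega /\
  forall P, is_ideal Y P -> (forall v, P v -> v = 0) \/ (forall v, P v).

(* V = (+)_{g in G} V^g is a grading of the VOA by the abelian group G.
   We include omega in V^0, so that V^0 is a vertex operator subalgebra
   (with the same vacuum and Virasoro vector). *)
Definition graded_by (G : zmodType) (Y : V -> int -> V -> V) (omega : V)
    (Vg : G -> V -> Prop) : Prop :=
  (forall g, subspace (Vg g)) /\
  (forall v, exists (s : seq G) (f : G -> V),
      (forall g, Vg g (f g)) /\ v = \sum_(g <- s) f g) /\
  (forall (s : seq G) (f : G -> V), uniq s -> (forall g, Vg g (f g)) ->
      \sum_(g <- s) f g = 0 -> forall g, g \in s -> f g = 0) /\
  (forall g h u v n, Vg g u -> Vg h v -> Vg (g + h) (Y u n v)) /\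
  Vg 0 omega.

(* Intertwining operator of type (W3 ; W1 W2) for the vertex operator
   subalgebra U of (V, Y, 1, omega), where U, W1, W2, W3 are subspaces of V
   and the U-module structures are given by restricting Y.
   I w1 p w2 = (w1)_(p) w2, where I(w1,z) = \sum_{p in C} (w1)_(p) z^{-p-1}.
   Only the values on W1 x W2 matter. *)
Definition is_intertwining (Y : V -> int -> V -> V) (omega : V)
    (U W1 W2 W3 : V -> Prop) (I : V -> C -> V -> V) : Prop :=
  (forall (a : C) w1 w1' p w2, W1 w1 -> W1 w1' -> W2 w2 ->
      I (a *: w1 + w1') p w2 = a *: I w1 p w2 + I w1' p w2) /\
  (forall (a : C) w1 p w2 w2', W1 w1 -> W2 w2 -> W2 w2' ->
      I w1 p (a *: w2 + w2') = a *: I w1 p w2 + I w1 p w2') /\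
  (forall w1 p w2, W1 w1 -> W2 w2 -> W3 (I w1 p w2)) /\
  (* lower truncation, needed for the Jacobi identity to make sense *)
  (forall w1 p w2, W1 w1 -> W2 w2 ->
      exists N : nat, forall n : nat, (N <= n)%N -> I w1 (p + n%:R) w2 = 0) /\
  (* [L(-1), I(w1,z)] = d/dz I(w1,z), with L(-1) = omega_0 *)
  (forall w1 p w2, W1 w1 -> W2 w2 ->
      Y omega 0 (I w1 p w2) - I w1 p (Y omega 0 w2) = - p *: I w1 (p - 1) w2) /\
  (forall v w1 w2 (m n : int) (p : C), U v -> W1 w1 -> W2 w2 ->
      series_eq
        (fun i => gbinom m i *: I (Y v (n + i%:Z) w1) (m%:~R + p - i%:R) w2)
        (fun i => ((-1) ^+ i * gbinom n i) *:
           (Y v (m + n - i%:Z) (I w1 (p + i%:R) w2)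
            - ((-1 : C) ^ n) *: I w1 (n%:~R + p - i%:R) (Y v (m + i%:Z) w2)))).

(* The fusion rule N_{W1,W2}^{W3} equals N: the space of intertwining
   operators of type (W3 ; W1 W2) (maps W1 -> Hom(W2,W3){z}, i.e. functions
   identified when they agree on W1 x W2) has dimension N. *)
Definition fusion_rule (Y : V -> int -> V -> V) (omega : V)
    (U W1 W2 W3 : V -> Prop) (N : nat) : Prop :=
  exists B : 'I_N -> (V -> C -> V -> V),
    (forall i, is_intertwining Y omega U W1 W2 W3 (B i)) /\
    (forall c : 'I_N -> C,
       (forall w1 p w2, W1 w1 -> W2 w2 -> \sum_i c i *: B i w1 p w2 = 0) ->
       forall i, c i = 0) /\
    (forall I, is_intertwining Y omega U W1 W2 W3 I ->
       exists c : 'I_N -> C, forall w1 p w2, W1 w1 -> W2 w2 ->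
         I w1 p w2 = \sum_i c i *: B i w1 p w2).

Definition VOA_isomorphic (Y Y' : V -> int -> V -> V) (one omega : V) : Prop :=
  exists f : V -> V,
    (forall (a : C) u v, f (a *: u + v) = a *: f u + f v) /\
    bijective f /\
    f one = one /\ f omega = omega /\
    (forall u n v, f (Y u n v) = Y' (f u) n (f v)).

End VOA.

From HB Require Import structures.
From mathcomp Require Import all_boot all_order all_algebra.
From mathcomp Require Import complex Rstruct zify ring.
From mathcomp Require Import boolp classical_sets.

(** The fusion rules force [Ybar] to be a scalar multiple of [Y] on each
    [V^g x V^h]: projecting the modes of [Ybar] onto [V^k] gives an
    intertwining operator of type (V^k; V^g V^h) for [V^0], which vanishes
    for [k <> g + h] and is proportional to [Y] for [k = g + h], with a nonzero
    factor [twist g h] by simplicity.  The vacuum property, skew symmetry and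
    associativity, read in both structures, make [twist] a normalized symmetric
    2-cocycle of [G] with values in [C^x].  Since [C^x] is divisible, such a
    cocycle is a coboundary, [twist g h = phi (g + h) / (phi g * phi h)], and
    rescaling each [V^g] by [phi g] is an isomorphism from [Y] to [Ybar]. *)

Set Implicit Arguments.
Unset Strict Implicit.
Unset Printing Implicit Defensive.

Import Order.TTheory GRing.Theory Num.Theory.
Local Open Scope ring_scope.

Lemma pnatrC_eq0 (n : nat) : ((n%:R : C) == 0) = (n == 0)%N.
Proof. exact: (@pnatr_eq0 (Rdefinitions.R)[i]). Qed.

Lemma intrC_inj : injective (intr : int -> C).
Proof. exact: (@intr_inj (Rdefinitions.R)[i]). Qed.

Lemma rootC_exists (d : nat) (a : C) : (0 < d)%N -> exists x : C, x ^+ d = a.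
Proof. by move=> d_gt0; exists (d.-root (a : (Rdefinitions.R)[i])); apply: rootCK. Qed.

Lemma big_ord_trunc (V : nmodType) (f : nat -> V) (M K : nat) : (M <= K)%N ->
  (forall i, (M <= i)%N -> f i = 0) -> \sum_(i < K) f i = \sum_(i < M) f i.
Proof.
move=> le_MK f0; rewrite -(subnKC le_MK) big_split_ord /= [X in _ + X]big1 ?addr0 //.
by move=> i _; apply: f0; rewrite leq_addr.
Qed.

Lemma gbinom0 (m : int) : gbinom m 0 = 1.
Proof. by rewrite /gbinom big_ord0 fact0 divr1. Qed.

Lemma gbinom0S (i : nat) : gbinom 0 i.+1 = 0.
Proof. by rewrite /gbinom big_ord_recl /= subrr !mul0r. Qed.

Section Series.
Variable V : lmodType C.
Implicit Types f g : nat -> V.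

Lemma series_eq_sum f g M : series_eq f g ->
  (forall i, (M <= i)%N -> f i = 0) -> (forall i, (M <= i)%N -> g i = 0) ->
  \sum_(i < M) f i = \sum_(i < M) g i.
Proof.
case=> N fg f0 g0; have := fg (maxn N M) (leq_maxl _ _).
by rewrite !(@big_ord_trunc _ _ M) // leq_maxr.
Qed.

Lemma series_eq_head f g M : series_eq f g -> (0 < M)%N ->
  (forall i, (M <= i)%N -> f i = 0) -> (forall i, (0 < i)%N -> g i = 0) ->
  \sum_(i < M) f i = g 0%N.
Proof.
move=> fg M_gt0 f0 g0; rewrite (series_eq_sum fg f0) => [|i /(leq_trans M_gt0)/g0//].
by rewrite (@big_ord_trunc _ _ 1) // big_ord1.
Qed.

Lemma series_eq_sym f g : series_eq f g -> series_eq g f.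
Proof. by case=> N fg; exists N => K /fg. Qed.

Lemma series_eq_ext f g f' g' :
  f =1 f' -> g =1 g' -> series_eq f g -> series_eq f' g'.
Proof.
move=> ff' gg' [N fg]; exists N => K le_NK.
under eq_bigr do rewrite -ff'; under [RHS]eq_bigr do rewrite -gg'.
exact: fg.
Qed.

Lemma series_eq_map (h : V -> V) f g : {morph h : u v / u + v} -> h 0 = 0 ->
  series_eq f g -> series_eq (fun i => h (f i)) (fun i => h (g i)).
Proof.
by move=> hD h0 [N fg]; exists N => K le_NK; rewrite -!(big_morph h hD h0) fg.
Qed.

Lemma series_eq0 f g : f =1 (fun=> 0) -> g =1 (fun=> 0) -> series_eq f g.
Proof. by move=> f0 g0; exists 0%N => K _; rewrite !big1 // => i _; rewrite (f0, g0). Qed.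

End Series.

Section Subspace.
Variables (V : lmodType C) (P : V -> Prop).
Hypothesis P_sub : subspace P.

Lemma subspace0 : P 0.
Proof. by case: P_sub. Qed.

Lemma subspaceD u v : P u -> P v -> P (u + v).
Proof. by case: P_sub => _ PZD Pu Pv; rewrite -[u]scale1r; apply: PZD. Qed.

Lemma subspaceZ a u : P u -> P (a *: u).
Proof. by case: P_sub => P0 PZD Pu; rewrite -[_ *: _]addr0; apply: PZD. Qed.

Lemma subspaceB u v : P u -> P v -> P (u - v).
Proof. by move=> Pu Pv; rewrite -scaleN1r; apply/subspaceD/subspaceZ. Qed.

Lemma subspace_sum (I : Type) (r : seq I) (F : I -> V) :
  (forall i, P (F i)) -> P (\sum_(i <- r) F i).
Proof.
move=> PF; elim: r => [|x r IHr]; first by rewrite big_nil; apply: subspace0.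
by rewrite big_cons; apply: subspaceD.
Qed.

End Subspace.

Lemma scalerIl (K : fieldType) (V : lmodType K) (v : V) :
  v != 0 -> injective (fun a : K => a *: v).
Proof.
move=> v_neq0 a b /eqP; rewrite -subr_eq0 -scalerBl scaler_eq0 (negbTE v_neq0) orbF.
by rewrite subr_eq0 => /eqP.
Qed.

Section VOATheory.
Variables (V : lmodType C) (Y : V -> int -> V -> V) (one omega : V).
Hypothesis HV : is_VOA Y one omega.

Lemma Y_linear_l a u u' n v : Y (a *: u + u') n v = a *: Y u n v + Y u' n v.
Proof. by case: HV. Qed.

Lemma Y_linear_r a u n v v' : Y u n (a *: v + v') = a *: Y u n v + Y u n v'.
Proof. by case: HV => _ []. Qed.

Lemma Y_trunc u v : exists N : int, forall n, N <= n -> Y u n v = 0.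
Proof. by case: HV => _ [_ []]. Qed.

Lemma Y_vacuum n v : Y one n v = if n == -1 then v else 0.
Proof. by case: HV => _ [_ [_ []]]. Qed.

Lemma Y_creation_ge0 v n : 0 <= n -> Y v n one = 0.
Proof. by have [_ [_ [_ [_ [/(_ v)[cre _] _]]]]] := HV; apply: cre. Qed.

Lemma Y_creation v : Y v (-1) one = v.
Proof. by have [_ [_ [_ [_ [/(_ v)[_ cre] _]]]]] := HV. Qed.

Lemma Y_jacobi u v w (m n k : int) :
  series_eq
    (fun i => gbinom m i *: Y (Y u (n + i%:Z) v) (m + k - i%:Z) w)
    (fun i => ((-1) ^+ i * gbinom n i) *:
       (Y u (m + n - i%:Z) (Y v (k + i%:Z) w)
        - ((-1 : C) ^ n) *: Y v (n + k - i%:Z) (Y u (m + i%:Z) w))).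
Proof. by case: HV => _ [_ [_ [_ [_ []]]]]. Qed.

Lemma Y_Lm1 v n w : Y (Y omega 0 v) n w = - n%:~R *: Y v (n - 1) w.
Proof. by case: HV => _ [_ [_ [_ [_ [_ [_ []]]]]]]. Qed.

Lemma Y0l n v : Y 0 n v = 0.
Proof.
have := Y_linear_l 1 0 0 n v; rewrite !scale1r addr0 => Y0D.
by apply: (addrI (Y 0 n v)); rewrite addr0 -Y0D.
Qed.

Lemma Y0r u n : Y u n 0 = 0.
Proof.
have := Y_linear_r 1 u n 0 0; rewrite !scale1r addr0 => Y0D.
by apply: (addrI (Y u n 0)); rewrite addr0 -Y0D.
Qed.

Lemma YDl u u' n v : Y (u + u') n v = Y u n v + Y u' n v.
Proof. by have := Y_linear_l 1 u u' n v; rewrite !scale1r. Qed.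

Lemma YDr u n v v' : Y u n (v + v') = Y u n v + Y u n v'.
Proof. by have := Y_linear_r 1 u n v v'; rewrite !scale1r. Qed.

Lemma YZl a u n v : Y (a *: u) n v = a *: Y u n v.
Proof. by rewrite -[_ *: u]addr0 Y_linear_l Y0l addr0. Qed.

Lemma YZr a u n v : Y u n (a *: v) = a *: Y u n v.
Proof. by rewrite -[_ *: v]addr0 Y_linear_r Y0r addr0. Qed.

Lemma Ysuml (I : Type) (r : seq I) (F : I -> V) n v :
  Y (\sum_(i <- r) F i) n v = \sum_(i <- r) Y (F i) n v.
Proof. exact: (big_morph (fun u => Y u n v) (fun u u' => YDl u u' n v) (Y0l n v)). Qed.

Lemma Ysumr (I : Type) (r : seq I) (F : I -> V) u n :
  Y u n (\sum_(i <- r) F i) = \sum_(i <- r) Y u n (F i).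
Proof. exact: (big_morph (Y u n) (YDr u n) (Y0r u n)). Qed.

Lemma Y_skew u w n M : (0 < M)%N ->
  (forall i, (M <= i)%N -> Y u (n + 1 + i%:Z) w = 0) ->
  \sum_(i < M) gbinom (-1) i *: Y (Y u (n + 1 + i%:Z) w) (-2 - i%:Z) one
  = Y u n w - (-1) ^ (n + 1) *: Y w n u.
Proof.
move=> M_gt0 uw0; rewrite (series_eq_head (Y_jacobi u w one (-1) (n + 1) (-1))) //.
- rewrite expr0 gbinom0 mul1r scale1r !Y_creation.
  have -> : -1 + (n + 1) - 0%:Z = n by lia.
  by have -> : n + 1 + -1 - 0%:Z = n by lia.
- by move=> i /uw0->; rewrite Y0l scaler0.
by move=> i i_gt0; rewrite !Y_creation_ge0 ?Y0r ?scaler0 ?subr0 ?scaler0 //; lia.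
Qed.

Definition left_ideal (P : V -> Prop) := forall a k x, P x -> P (Y a k x).

Lemma left_ideal_creation P : subspace P -> left_ideal P ->
  forall (j : nat) y, P y -> P (Y y (- j%:Z - 1) one).
Proof.
move=> P_sub; rewrite /left_ideal => P_left.
elim=> [|j IHj] y Py; first by rewrite oppr0 sub0r Y_creation.
have -> : Y y (- j.+1%:Z - 1) one = j.+1%:R^-1 *: Y (Y omega 0 y) (- j%:Z - 1) one.
  rewrite Y_Lm1 scalerA -mulrNz (_ : - (- j%:Z - 1) = j.+1); last by lia.
  rewrite pmulrn mulVf ?scale1r ?pnatrC_eq0 //.
  by congr Y; lia.
by apply/(subspaceZ P_sub)/IHj/P_left.
Qed.

Lemma left_ideal_is_ideal P : subspace P -> left_ideal P -> is_ideal Y P.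
Proof.
move=> P_sub; rewrite /left_ideal => P_left.
split=> // u w n Pw; split; first exact: P_left.
have [N uw0] := Y_trunc u w.
have uw0' i : (`|N - n|.+1 <= i)%N -> Y u (n + 1 + i%:Z) w = 0.
  by move=> ?; apply: uw0; lia.
have := Y_skew (ltn0Sn _) uw0'; set S := (X in X = _) => skew.
have sgn_neq0 : (-1 : C) ^ (n + 1) != 0.
  by rewrite expfz_eq0 oppr_eq0 oner_eq0 andbF.
have -> : Y w n u = ((-1) ^ (n + 1))^-1 *: (Y u n w - S).
  by rewrite skew opprB subrKC scalerA mulVf ?scale1r.
apply/(subspaceZ P_sub)/(subspaceB P_sub); first exact: P_left.
apply: subspace_sum => // i.
rewrite (_ : -2 - i%:Z = - i.+1%:Z - 1); last by lia.
exact/(subspaceZ P_sub)/(left_ideal_creation P_sub P_left)/P_left.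
Qed.

Lemma annihilator_left_ideal u : left_ideal (fun w => forall j, Y u j w = 0).
Proof.
move=> a k w uw0; have [N ua0] := Y_trunc u a; have [K aw0] := Y_trunc a w.
(* Descending induction on [k]: once [u_(M+i) a = 0], the Jacobi identity
   expresses [u_j (a_k w)] through the [a_(k+i) w] with [i > 0]. *)
suff uaw0 d : forall k, K - d%:Z <= k -> forall j, Y u j (Y a k w) = 0.
  by apply: (uaw0 `|K - k|%N); lia.
elim: d => [|d IHd] {}k le_k j; first by rewrite aw0 ?Y0r //; lia.
pose M := `|N|%N.
have := series_eq_sum (M := 1) (Y_jacobi u a w (j - M%:Z) M%:Z k).
rewrite !big_ord1 /= !gbinom0 expr0 mul1r !scale1r uw0 Y0r scaler0 subr0.
rewrite ua0 ?Y0l ?subr0; last by lia.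
rewrite (_ : j - M%:Z + M%:Z = j); last by lia.
move=> <- //.
- by move=> i _; rewrite ua0 ?Y0l ?scaler0 //; lia.
- by move=> i i_gt0; rewrite uw0 Y0r scaler0 subr0 IHd ?scaler0 //; lia.
Qed.

Lemma Y_comm0 a x k w : Y (Y a 0 x) k w = Y a 0 (Y x k w) - Y x k (Y a 0 w).
Proof.
have := series_eq_head (Y_jacobi a x w 0 0 k) (ltn0Sn 0).
rewrite big_ord1 gbinom0 scale1r expr0 mul1r scale1r expr0z scale1r.
rewrite !(addr0, add0r, subr0) => -> //.
- by case=> // i; rewrite gbinom0S scale0r.
- by case=> // i; rewrite gbinom0S mulr0 scale0r.
Qed.

Lemma Y_assoc u v w (M : nat) n0 k L : (0 < L)%N ->
  (forall i : nat, Y u (M%:Z + i%:Z) w = 0) ->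
  (forall i : nat, (0 < i)%N -> Y u (n0 + i%:Z) v = 0) ->
  (forall i : nat, (L <= i)%N -> Y v (k + i%:Z) w = 0) ->
  Y (Y u n0 v) (M%:Z + k) w =
  \sum_(i < L) ((-1) ^+ i * gbinom n0 i) *:
     Y u (M%:Z + n0 - i%:Z) (Y v (k + i%:Z) w).
Proof.
move=> L_gt0 uw0 uv0 vw0.
have := series_eq_head (series_eq_sym (Y_jacobi u v w M%:Z n0 k)) L_gt0.
rewrite gbinom0 scale1r addr0 subr0.
under [in X in _ -> _ -> X]eq_bigr do rewrite uw0 Y0r scaler0 subr0.
move=> <- //.
- by move=> i /vw0->; rewrite uw0 !Y0r scaler0 subr0 scaler0.
by move=> i /uv0->; rewrite Y0l scaler0.
Qed.

Lemma Y_max_mode u v n1 : Y u n1 v != 0 ->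
  exists n0, Y u n0 v != 0 /\ forall i : nat, (0 < i)%N -> Y u (n0 + i%:Z) v = 0.
Proof.
move=> uv_neq0; have [N uv0] := Y_trunc u v.
have [|d Nd_neq0 d_min] := ex_minnP (P := fun d => Y u (N - d%:Z) v != 0).
  exists `|N - n1|%N; case: (leP N n1) => [le_Nn1|lt_n1N].
    by rewrite uv0 ?eqxx in uv_neq0.
  by rewrite (_ : N - _ = n1) //; lia.
exists (N - d%:Z); split=> // i i_gt0.
have [le_di|lt_id] := leqP d i; first by rewrite uv0 //; lia.
move: (lt_id); apply: contraTeq => uv_neq0'; rewrite -leqNgt.
suff: (d <= d - i)%N by lia.
by apply: d_min; rewrite (_ : N - _ = N - d%:Z + i%:Z) //; lia.
Qed.

End VOATheory.

Lemma simple_VOA_Y_neq0 (V : lmodType C) (Y : V -> int -> V -> V) (one omega : V) :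
  simple_VOA Y one omega -> forall u v, u <> 0 -> v <> 0 -> exists n, Y u n v <> 0.
Proof.
move=> [HV simple] u v u_neq0 v_neq0; apply: contrapT => /forallNP uv0.
have ann_sub : subspace (fun w => forall j, Y u j w = 0).
  by split=> [j|a x y x0 y0 j]; rewrite ?(Y0r HV) // (Y_linear_r HV) x0 y0 scaler0 addr0.
have ann_ideal := left_ideal_is_ideal HV ann_sub (annihilator_left_ideal (u := u) HV).
have [ann0|annT] := simple _ ann_ideal.
  by apply: v_neq0; apply: ann0 => j; apply: contrapT; exact: uv0.
by apply: u_neq0; rewrite -(Y_creation HV u) annT.
Qed.

Lemma sum_supp_sub (V : nmodType) (G : eqType) (f : G -> V) (s t : seq G) :
  uniq s -> uniq t -> {subset s <= t} -> (forall g, g \notin s -> f g = 0) ->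
  \sum_(g <- t) f g = \sum_(g <- s) f g.
Proof.
move=> s_uniq t_uniq sub_st f0.
rewrite (bigID (mem s)) /= [X in _ + X]big1 ?addr0; last by move=> g /f0.
rewrite -big_filter; apply/perm_big/uniq_perm; rewrite ?filter_uniq // => g.
by rewrite mem_filter; case s_g: (g \in s) => //=; rewrite sub_st.
Qed.

Lemma sum_supp_eq (V : nmodType) (G : eqType) (f : G -> V) (s t : seq G) :
  uniq s -> uniq t ->
  (forall g, g \notin s -> f g = 0) -> (forall g, g \notin t -> f g = 0) ->
  \sum_(g <- s) f g = \sum_(g <- t) f g.
Proof.
move=> s_uniq t_uniq f0s f0t; have st_uniq := undup_uniq (s ++ t).
rewrite -(sum_supp_sub s_uniq st_uniq _ f0s) ?(sum_supp_sub t_uniq st_uniq _ f0t) //.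
  by move=> g g_t; rewrite mem_undup mem_cat g_t orbT.
by move=> g g_s; rewrite mem_undup mem_cat g_s.
Qed.

Section Grading.
Variables (G : zmodType) (V : lmodType C) (Y : V -> int -> V -> V) (omega : V).
Variable Vg : G -> V -> Prop.
Hypothesis HG : graded_by Y omega Vg.

Lemma graded_sub g : subspace (Vg g).
Proof. by case: HG. Qed.

Lemma graded_Y g h u v n : Vg g u -> Vg h v -> Vg (g + h) (Y u n v).
Proof. by have [_ [_ [_ [grY _]]]] := HG; apply: grY. Qed.

Lemma graded_omega : Vg 0 omega.
Proof. by have [_ [_ [_ [_ om0]]]] := HG. Qed.

Definition hdecomp v (f : G -> V) (s : seq G) :=
  [/\ uniq s, (forall g, g \notin s -> f g = 0), (forall g, Vg g (f g)) &
      v = \sum_(g <- s) f g].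

Lemma hdecomp0 : hdecomp 0 (fun=> 0) [::].
Proof. by split=> // [g|]; [exact: subspace0 (graded_sub g) | rewrite big_nil]. Qed.

Lemma hdecomp1 g x : Vg g x -> hdecomp x (fun h => if h == g then x else 0) [:: g].
Proof.
move=> x_g; split=> // [h|h|]; first by rewrite inE => /negbTE->.
  by case: eqP => [->//|_]; exact: subspace0 (graded_sub h).
by rewrite big_seq1 eqxx.
Qed.

Lemma hdecomp_widen v f s t : hdecomp v f s -> uniq t -> {subset s <= t} ->
  hdecomp v f t.
Proof.
case=> s_uniq f0 f_g ->{v} t_uniq sub_st; split=> // [g|].
  by move=> g_t; apply: f0; apply: contra g_t; apply: sub_st.
by rewrite (sum_supp_sub s_uniq t_uniq sub_st f0).
Qed.

Lemma hdecompD v1 f1 s1 v2 f2 s2 : hdecomp v1 f1 s1 -> hdecomp v2 f2 s2 ->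
  hdecomp (v1 + v2) (fun g => f1 g + f2 g) (undup (s1 ++ s2)).
Proof.
set t := undup _; have t_uniq : uniq t by rewrite undup_uniq.
have sub1 : {subset s1 <= t} by move=> g g_s1; rewrite mem_undup mem_cat g_s1.
have sub2 : {subset s2 <= t} by move=> g g_s2; rewrite mem_undup mem_cat g_s2 orbT.
move=> /hdecomp_widen/(_ t_uniq sub1)[_ f10 f1_g ->].
move=> /hdecomp_widen/(_ t_uniq sub2)[_ f20 f2_g ->].
split=> // [g g_t|g|]; last by rewrite big_split.
  by rewrite f10 ?f20 ?addr0.
by apply: subspaceD (f1_g g) (f2_g g); apply: graded_sub.
Qed.

Lemma hdecompZ a v f s : hdecomp v f s -> hdecomp (a *: v) (fun g => a *: f g) s.
Proof.
case=> s_uniq f0 f_g ->; split=> // [g /f0->|g|]; rewrite ?scaler0 ?scaler_sumr //.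
by apply: subspaceZ (f_g g); apply: graded_sub.
Qed.

Lemma hdecomp_exists v : exists fs : (G -> V) * seq G, hdecomp v fs.1 fs.2.
Proof.
have [s [f [f_g ->]]] : exists s f, (forall g, Vg g (f g)) /\ v = \sum_(g <- s) f g.
  by case: HG => _ [].
elim: s => [|g s [[f' s'] IHs]].
  by exists (fun=> 0, [::]); rewrite big_nil; apply: hdecomp0.
by rewrite big_cons; eexists (_, _); exact: hdecompD (hdecomp1 (f_g g)) IHs.
Qed.

Lemma hdecomp_uniq v f1 s1 f2 s2 : hdecomp v f1 s1 -> hdecomp v f2 s2 -> f1 =1 f2.
Proof.
move=> d1 d2 g; apply/eqP; rewrite -subr_eq0 -scaleN1r; apply/eqP.
have [t_uniq f0 f_g sum0] := hdecompD d1 (hdecompZ (-1) d2).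
move: sum0.
rewrite [in LHS]scaleN1r subrr => /esym sum0.
have [g_t|/f0//] := boolP (g \in undup (s1 ++ s2)).
by have [_ [_ [indep _]]] := HG; apply: (indep _ _ t_uniq f_g sum0).
Qed.

Definition hdec v : (G -> V) * seq G := sval (cid (hdecomp_exists v)).
Definition gproj g v := (hdec v).1 g.
Definition gsupp v := (hdec v).2.

Lemma hdecP v : hdecomp v (gproj^~ v) (gsupp v).
Proof. exact: svalP (cid (hdecomp_exists v)). Qed.

Lemma gproj_hdecomp v f s : hdecomp v f s -> forall g, gproj g v = f g.
Proof. exact: hdecomp_uniq (hdecP v). Qed.

Lemma gproj_in g v : Vg g (gproj g v).
Proof. by case: (hdecP v) => _ _ /(_ g). Qed.

Lemma gproj_lin g a u v : gproj g (a *: u + v) = a *: gproj g u + gproj g v.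
Proof. exact: gproj_hdecomp (hdecompD (hdecompZ a (hdecP u)) (hdecP v)) g. Qed.

Lemma gproj0 g : gproj g 0 = 0.
Proof. exact: gproj_hdecomp hdecomp0 g. Qed.

Lemma gprojD g u v : gproj g (u + v) = gproj g u + gproj g v.
Proof. by have := gproj_lin g 1 u v; rewrite !scale1r. Qed.

Lemma gprojZ g a u : gproj g (a *: u) = a *: gproj g u.
Proof. by have := gproj_lin g a u 0; rewrite !addr0 gproj0 addr0. Qed.

Lemma gprojB g u v : gproj g (u - v) = gproj g u - gproj g v.
Proof. by rewrite gprojD -scaleN1r gprojZ scaleN1r. Qed.

Lemma gproj_homog k x : Vg k x -> forall g, gproj g x = if g == k then x else 0.
Proof. by move=> x_k; apply: gproj_hdecomp (hdecomp1 x_k). Qed.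

Lemma homog_gproj k x : (forall g, g != k -> gproj g x = 0) -> Vg k x.
Proof.
move=> proj0; have [_ _ _ ->] := hdecP x; apply: (subspace_sum (graded_sub k)) => g.
have [->|/proj0->] := eqVneq g k; first exact: gproj_in.
exact: subspace0 (graded_sub k).
Qed.

Definition gscale (phi : G -> C) v := \sum_(g <- gsupp v) phi g *: gproj g v.

Lemma gscale_hdecomp phi v f s : hdecomp v f s ->
  gscale phi v = \sum_(g <- s) phi g *: f g.
Proof.
move=> d; rewrite /gscale; under eq_bigr do rewrite (gproj_hdecomp d).
have [s_uniq f0 _ _] := d; have [t_uniq proj0 _ _] := hdecP v.
apply: sum_supp_eq => // g g_out; last by rewrite f0 ?scaler0.
by rewrite -(gproj_hdecomp d) proj0 ?scaler0.
Qed.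

Lemma gscale_lin phi a u v : gscale phi (a *: u + v) = a *: gscale phi u + gscale phi v.
Proof.
have d := hdecompD (hdecompZ a (hdecP u)) (hdecP v).
have t_uniq : uniq (undup (gsupp u ++ gsupp v)) by rewrite undup_uniq.
have du := hdecomp_widen (hdecP u) t_uniq.
have dv := hdecomp_widen (hdecP v) t_uniq.
rewrite (gscale_hdecomp _ d) (gscale_hdecomp _ (du _)) ?(gscale_hdecomp _ (dv _)).
- rewrite scaler_sumr -big_split; apply: eq_bigr => g _.
  by rewrite scalerDr !scalerA mulrC.
- by move=> g g_v; rewrite mem_undup mem_cat g_v orbT.
by move=> g g_u; rewrite mem_undup mem_cat g_u.
Qed.

Lemma gscale0 phi : gscale phi 0 = 0.
Proof. by rewrite (gscale_hdecomp _ hdecomp0) big_nil. Qed.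

Lemma gscaleD phi u v : gscale phi (u + v) = gscale phi u + gscale phi v.
Proof. by have := gscale_lin phi 1 u v; rewrite !scale1r. Qed.

Lemma gscale_sum phi (I : Type) (r : seq I) (F : I -> V) :
  gscale phi (\sum_(i <- r) F i) = \sum_(i <- r) gscale phi (F i).
Proof. exact: (big_morph (gscale phi) (gscaleD phi) (gscale0 phi)). Qed.

Lemma gscale_homog phi k x : Vg k x -> gscale phi x = phi k *: x.
Proof. by move=> x_k; rewrite (gscale_hdecomp _ (hdecomp1 x_k)) big_seq1 eqxx. Qed.

Lemma gscaleK phi psi : (forall g, psi g * phi g = 1) -> cancel (gscale phi) (gscale psi).
Proof.
move=> psiK v; have [s_uniq proj0 proj_g v_sum] := hdecP v.
have d : hdecomp (gscale phi v) (fun g => phi g *: gproj g v) (gsupp v).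
  split=> // [g /proj0->|g]; first by rewrite scaler0.
  by apply: subspaceZ (proj_g g); apply: graded_sub.
rewrite (gscale_hdecomp _ d) {3}v_sum; apply: eq_bigr => g _.
by rewrite scalerA psiK scale1r.
Qed.

Section Rescaling.
Variables (Ybar : V -> int -> V -> V) (one : V).
Hypotheses (HY : is_VOA Y one omega) (HYbar : is_VOA Ybar one omega).
Hypothesis one_0 : Vg 0 one.

Lemma gproj_Yl0 x n v g : Vg 0 x -> gproj g (Y x n v) = Y x n (gproj g v).
Proof.
move=> x_0; apply: (gproj_hdecomp (f := fun h => Y x n (gproj h v)) (s := gsupp v)).
have [s_uniq proj0 proj_g {1}->] := hdecP v.
split=> // [h /proj0->|h|]; first by rewrite (Y0r HY).
- by move: (graded_Y n x_0 (proj_g h)); rewrite add0r.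
by rewrite (Ysumr HY).
Qed.

Lemma gproj_Yr0 x n v g : Vg 0 v -> gproj g (Y x n v) = Y (gproj g x) n v.
Proof.
move=> v_0; apply: (gproj_hdecomp (f := fun h => Y (gproj h x) n v) (s := gsupp x)).
have [s_uniq proj0 proj_g {1}->] := hdecP x.
split=> // [h /proj0->|h|]; first by rewrite (Y0l HY).
- by move: (graded_Y n (proj_g h) v_0); rewrite addr0.
by rewrite (Ysuml HY).
Qed.

Lemma graded_rescale_iso (phi : G -> C) :
  (forall g, phi g != 0) -> phi 0 = 1 ->
  (forall g h u v n, Vg g u -> Vg h v ->
     phi g * phi h *: Ybar u n v = phi (g + h) *: Y u n v) ->
  VOA_isomorphic Y Ybar one omega.
Proof.
move=> phi_neq0 phi0 phiYbar.
exists (gscale phi); split; [exact: gscale_lin | split; [|split; [|split]]].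
- exists (gscale (fun g => (phi g)^-1)); apply: gscaleK => g; first by rewrite mulVf.
  by rewrite mulfV.
- by rewrite (gscale_homog _ one_0) phi0 scale1r.
- by rewrite (gscale_homog _ graded_omega) phi0 scale1r.
move=> u n v; have [_ _ u_g {1}->] := hdecP u; have [_ _ v_h {1}->] := hdecP v.
rewrite [in RHS]/gscale (Ysuml HY) (Ysuml HYbar) gscale_sum; apply: eq_bigr => g _.
rewrite (Ysumr HY) (YZl HYbar) (Ysumr HYbar) gscale_sum scaler_sumr.
apply: eq_bigr => h _.
rewrite (gscale_homog _ (graded_Y n (u_g g) (v_h h))) (YZr HYbar) scalerA.
by rewrite phiYbar.
Qed.

End Rescaling.

End Grading.

Definition isint (p : C) := exists n : int, p = n%:~R.

Lemma isint_shift (p q : C) : ~ isint p -> isint (q - p) -> ~ isint q.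
Proof.
move=> p_nonint [z qp] [n qn]; apply: p_nonint; exists (n - z).
by rewrite intrB -qn -qp opprB subrKC.
Qed.

(* Intertwining operators have complex exponents; integer modes are extended
   by [0] to the non-integral ones. *)
Section IntegerModes.
Variables (V : lmodType C) (X : V -> int -> V -> V).

Definition int_mode (w1 : V) (p : C) (w2 : V) : V :=
  if pselect (isint p) is left p_int then X w1 (sval (cid p_int)) w2 else 0.

Lemma int_modeE w1 (n : int) w2 : int_mode w1 n%:~R w2 = X w1 n w2.
Proof.
rewrite /int_mode; case: pselect => [p_int|]; last by case; exists n.
by case: cid => m /= /intrC_inj->.
Qed.

Lemma int_mode_nonint w1 p w2 : ~ isint p -> int_mode w1 p w2 = 0.
Proof. by rewrite /int_mode; case: pselect. Qed.

End IntegerModes.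

Section ProjectedModes.
Variables (G : zmodType) (V : lmodType C) (Y X : V -> int -> V -> V) (one omega : V).
Variable Vg : G -> V -> Prop.
Hypothesis HG : graded_by Y omega Vg.
Hypotheses (HY : is_VOA Y one omega) (HX : is_VOA X one omega).
Hypothesis XY_0 : forall u, Vg 0 u -> forall n v, X u n v = Y u n v.

Let I k w1 p w2 := gproj HG k (int_mode X w1 p w2).

Lemma projected_modes_jacobi k v w1 w2 (m n : int) (p : C) : Vg 0 v ->
  series_eq
    (fun i => gbinom m i *: I k (Y v (n + i%:Z) w1) (m%:~R + p - i%:R) w2)
    (fun i => ((-1) ^+ i * gbinom n i) *:
       (Y v (m + n - i%:Z) (I k w1 (p + i%:R) w2)
        - ((-1 : C) ^ n) *: I k w1 (n%:~R + p - i%:R) (Y v (m + i%:Z) w2))).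
Proof.
move=> v_0; rewrite /I; have [[q ->]|p_nonint] := pselect (isint p).
  have := series_eq_map (gprojD HG k) (gproj0 HG k) (Y_jacobi HX v w1 w2 m n q).
  apply: series_eq_ext => i.
    by rewrite pmulrn -intrD -intrB int_modeE (XY_0 v_0) gprojZ.
  rewrite pmulrn -!intrD -!intrB !int_modeE gprojZ gprojB gprojZ !(XY_0 v_0).
  by rewrite !(gproj_Yl0 HG HY).
have nonint_shift (z : int) q : q - p = z%:~R -> ~ isint q.
  by move=> qp; apply: isint_shift p_nonint _; exists z.
apply: series_eq0 => i.
  rewrite int_mode_nonint ?gproj0 ?scaler0 //; apply: (nonint_shift (m - i%:Z)).
  by rewrite intrB pmulrn; ring.
rewrite !int_mode_nonint ?gproj0 ?(Y0r HY) ?scaler0 ?subr0 ?scaler0 //.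
  by apply: (nonint_shift (n - i%:Z)); rewrite intrB pmulrn; ring.
by apply: (nonint_shift i); rewrite pmulrn; ring.
Qed.

Lemma projected_modes_Lm1 k w1 p w2 :
  Y omega 0 (I k w1 p w2) - I k w1 p (Y omega 0 w2) = - p *: I k w1 (p - 1) w2.
Proof.
have om_0 := graded_omega HG; rewrite /I; have [[q ->]|p_nonint] := pselect (isint p).
  rewrite -(intrB _ q 1) !int_modeE -(gproj_Yl0 HG HY) // -gprojB -gprojZ.
  by rewrite -!(XY_0 om_0) -(Y_comm0 HX) (Y_Lm1 HX).
rewrite !int_mode_nonint ?gproj0 ?(Y0r HY) ?subr0 ?scaler0 //.
by apply: isint_shift p_nonint _; exists (-1); rewrite addrAC subrr add0r.
Qed.

Lemma projected_modes_intertwining g h k :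
  is_intertwining Y omega (Vg 0) (Vg g) (Vg h) (Vg k) (I k).
Proof.
split; [|split; [|split; [|split; [|split]]]].
- move=> a w1 w1' p w2 _ _ _; rewrite /I; have [[q ->]|p_nonint] := pselect (isint p).
    by rewrite !int_modeE (Y_linear_l HX) gproj_lin.
  by rewrite !int_mode_nonint // !gproj0 scaler0 addr0.
- move=> a w1 p w2 w2' _ _ _; rewrite /I; have [[q ->]|p_nonint] := pselect (isint p).
    by rewrite !int_modeE (Y_linear_r HX) gproj_lin.
  by rewrite !int_mode_nonint // !gproj0 scaler0 addr0.
- by move=> *; apply: gproj_in.
- move=> w1 p w2 _ _; rewrite /I; have [[q ->]|p_nonint] := pselect (isint p).
    have [N Xw0] := Y_trunc HX w1 w2; exists `|N - q|%N => i le_i.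
    by rewrite pmulrn -intrD int_modeE Xw0 ?gproj0 //; lia.
  exists 0%N => i _; rewrite int_mode_nonint ?gproj0 //.
  by apply: isint_shift p_nonint _; exists i; rewrite addrAC subrr add0r pmulrn.
- by move=> *; apply: projected_modes_Lm1.
by move=> v w1 w2 m n p v_0 _ _; apply: projected_modes_jacobi.
Qed.

End ProjectedModes.

Section FusionRules.
Variables (V : lmodType C) (Y : V -> int -> V -> V) (omega : V).
Variables (U W1 W2 W3 : V -> Prop).
Let intw := is_intertwining Y omega U W1 W2 W3.

Lemma fusion_rule0_vanish I : fusion_rule Y omega U W1 W2 W3 0 -> intw I ->
  forall w1 p w2, W1 w1 -> W2 w2 -> I w1 p w2 = 0.
Proof.
by case=> B [_ [_ span]] /span[a Ia] w1 p w2 W1w1 W2w2; rewrite Ia // big_ord0.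
Qed.

Lemma fusion_rule1_proportional I J w1 p w2 :
  fusion_rule Y omega U W1 W2 W3 1 -> intw I -> intw J ->
  W1 w1 -> W2 w2 -> I w1 p w2 != 0 ->
  exists a, forall w1 p w2, W1 w1 -> W2 w2 -> J w1 p w2 = a *: I w1 p w2.
Proof.
case=> B [_ [_ span]] /span[a Ia] /span[b Jb] W1w1 W2w2 I_neq0.
have a_neq0 : a ord0 != 0.
  by apply: contraNneq I_neq0 => a0; rewrite Ia // big_ord1 a0 scale0r.
exists (b ord0 / a ord0) => w1' p' w2' W1w1' W2w2'.
by rewrite Ia // Jb // !big_ord1 scalerA mulfVK.
Qed.

End FusionRules.

Section CocycleSplitting.
Variables (G : zmodType) (c : G -> G -> C).
Hypotheses (c_neq0 : forall g h, c g h != 0) (c0 : forall g, c g 0 = 1).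
Hypothesis cC : forall g h, c g h = c h g.
Hypothesis c_cocycle : forall g h l, c g h * c (g + h) l = c h l * c g (h + l).

(* The extension of [G] by [C^x] with cocycle [c], abelian since [c] is
   symmetric.  A homomorphic section [g |-> (g, phi g)] of [cpr] is exactly a
   solution of [phi (g + h) = c g h * phi g * phi h]. *)
Definition cext := {p : G * C | p.2 != 0}.
HB.instance Definition _ := SubChoice.copy cext {p : G * C | p.2 != 0}.

Definition cext_add (x y : cext) : cext :=
  exist _ ((val x).1 + (val y).1, (val x).2 * (val y).2 * c (val x).1 (val y).1)
    (mulf_neq0 (mulf_neq0 (valP x) (valP y)) (c_neq0 _ _)).
Definition cext_zero : cext := exist _ (0, 1) (oner_neq0 C).
Definition cext_opp (x : cext) : cext :=
  exist _ (- (val x).1, ((val x).2 * c (val x).1 (- (val x).1))^-1)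
    (invr_neq0 (mulf_neq0 (valP x) (c_neq0 _ _))).

Lemma cext_addA : associative cext_add.
Proof.
move=> [[x1 x2] ?] [[y1 y2] ?] [[z1 z2] ?]; apply: val_inj => /=.
congr pair; first by rewrite addrA.
by rewrite -!mulrA [c x1 y1 * _]mulrCA c_cocycle; congr (_ * _); ring.
Qed.

Lemma cext_addC : commutative cext_add.
Proof.
move=> [[x1 x2] ?] [[y1 y2] ?]; apply: val_inj => /=.
by congr pair; [rewrite addrC | rewrite cC mulrAC mulrC mulrA].
Qed.

Lemma cext_add0 : left_id cext_zero cext_add.
Proof.
move=> [[x1 x2] ?]; apply: val_inj => /=.
by congr pair; [rewrite add0r | rewrite cC c0 mul1r mulr1].
Qed.

Lemma cext_addN : left_inverse cext_zero cext_opp cext_add.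
Proof.
move=> [[x1 x2] x2_neq0]; apply: val_inj => /=.
congr pair; first by rewrite addNr.
by rewrite (cC (- x1)) -mulrA mulVf // mulf_neq0.
Qed.

HB.instance Definition _ :=
  GRing.isZmodule.Build cext cext_addA cext_addC cext_add0 cext_addN.

Definition cpr (x : cext) : G := (val x).1.
Definition csc (x : cext) : C := (val x).2.

Lemma cprD x y : cpr (x + y) = cpr x + cpr y.
Proof. by []. Qed.

Lemma cprN x : cpr (- x) = - cpr x.
Proof. by []. Qed.

Lemma cprMz x j : cpr (x *~ j) = cpr x *~ j.
Proof.
have cprMn n : cpr (x *+ n) = cpr x *+ n.
  by elim: n => [|n IHn]; rewrite ?mulrS ?cprD ?IHn.
by case: j => n; rewrite ?NegzE ?mulrNz ?cprN cprMn.
Qed.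

Lemma csc_neq0 x : csc x != 0.
Proof. exact: valP x. Qed.

Lemma cscD x y : csc (x + y) = csc x * csc y * c (cpr x) (cpr y).
Proof. by []. Qed.

Lemma cext_eq x y : cpr x = cpr y -> csc x = csc y -> x = y.
Proof.
move: x y => [[x1 x2] ?] [[y1 y2] ?] eq1 eq2; apply: val_inj => /=.
by rewrite /cpr /csc /= in eq1 eq2; rewrite eq1 eq2.
Qed.

Definition cinj (a : C) : cext := insubd (0 : cext) (0, a).
Definition clift (g : G) : cext := insubd (0 : cext) (g, 1).

Lemma cpr_cinj a : cpr (cinj a) = 0.
Proof. by rewrite /cpr /cinj val_insubd; case: ifP. Qed.

Lemma csc_cinj a : a != 0 -> csc (cinj a) = a.
Proof. by move=> a_neq0; rewrite /csc /cinj val_insubd /= a_neq0. Qed.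

Lemma cpr_clift g : cpr (clift g) = g.
Proof. by rewrite /cpr /clift val_insubd /= oner_neq0. Qed.

Lemma cpr_eq0 y : cpr y = 0 -> y = cinj (csc y).
Proof. by move=> y0; apply: cext_eq; rewrite ?cpr_cinj ?csc_cinj ?csc_neq0. Qed.

Lemma cinj1 : cinj 1 = 0.
Proof. by apply: cext_eq; rewrite ?cpr_cinj ?csc_cinj ?oner_neq0. Qed.

Lemma cinjM a b : a != 0 -> b != 0 -> cinj a + cinj b = cinj (a * b).
Proof.
move=> a_neq0 b_neq0; apply: cext_eq; first by rewrite cprD !cpr_cinj addr0.
by rewrite cscD !csc_cinj ?mulf_neq0 // !cpr_cinj c0 mulr1.
Qed.

Lemma cinjX a n : a != 0 -> cinj a *+ n = cinj (a ^+ n).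
Proof.
move=> a_neq0; elim: n => [|n IHn]; first by rewrite cinj1.
by rewrite mulrS IHn cinjM ?expf_neq0 // exprS.
Qed.

Lemma cext_root s g (d : nat) : (0 < d)%N -> cpr s = g *~ d ->
  exists e, cpr e = g /\ e *~ d = s.
Proof.
move=> d_gt0 s_gd; set y := clift g *~ d - s.
have y0 : cpr y = 0 by rewrite cprD cprN cprMz cpr_clift s_gd subrr.
have [la la_d] := rootC_exists (csc y)^-1 d_gt0.
have la_neq0 : la != 0.
  apply/eqP => la0; move: la_d; rewrite la0 expr0n eqn0Ngt d_gt0 /= => /esym/eqP.
  by rewrite invr_eq0 (negbTE (csc_neq0 y)).
exists (clift g + cinj la); split; first by rewrite cprD cpr_clift cpr_cinj addr0.
rewrite mulrzDl -!pmulrn (cinjX _ la_neq0) la_d.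
have -> : clift g *+ d = s + cinj (csc y) by rewrite -cpr_eq0 // pmulrn addrC subrK.
by rewrite -addrA cinjM ?invr_neq0 ?csc_neq0 // mulfV ?csc_neq0 // cinj1 addr0.
Qed.

(* Subgroups meeting [ker cpr] trivially, the empty set included so that unions
   of chains remain partial sections.  A maximal one is a full section because
   [C^x] is divisible ([cext_root]). *)
Definition psection (S : set cext) :=
  (forall x y, S x -> S y -> S (x - y)) /\ (forall y, S y -> cpr y = 0 -> y = 0).

Lemma psection_bigcup (F : set (set cext)) : (F `<=` psection)%classic ->
  total_on F subset -> psection (\bigcup_(X in F) X)%classic.
Proof.
move=> F_psec F_total; split=> [x y [X FX Xx] [Z FZ Zy]|y [X FX Xy]].
  have [XZ|ZX] := F_total X Z FX FZ.
    by exists Z => //; apply: (proj1 (F_psec Z FZ)) => //; apply: XZ.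
  by exists X => //; apply: (proj1 (F_psec X FX)) => //; apply: ZX.
exact: (proj2 (F_psec X FX)).
Qed.

Section MaximalPartialSection.
Variable S : set cext.
Hypothesis S_psec : psection S.
Hypothesis S_max : forall B, (S `<` B)%classic -> ~ psection B.

Lemma max_psection0 : S 0.
Proof.
apply: contrapT => S0_out; have [S_sub _] := S_psec.
have S_empty x : ~ S x by move=> Sx; apply: S0_out; rewrite -(subrr x); apply: S_sub.
apply: (S_max (B := [set 0]%classic)); last by split=> [x y -> ->|y ->]; rewrite ?subr0.
by split=> [x /S_empty | /(_ 0 erefl)].
Qed.

Lemma max_psectionB x y : S x -> S y -> S (x - y).
Proof. exact: (proj1 S_psec). Qed.

Lemma max_psectionN x : S x -> S (- x).
Proof. by rewrite -sub0r; apply/max_psectionB/max_psection0. Qed.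

Lemma max_psectionD x y : S x -> S y -> S (x + y).
Proof. by move=> Sx /max_psectionN Sy; rewrite -[y]opprK; apply: max_psectionB. Qed.

Lemma max_psectionMz x j : S x -> S (x *~ j).
Proof.
move=> Sx; have SMn n : S (x *+ n).
  by elim: n => [|n IHn]; [apply: max_psection0 | rewrite mulrS; apply: max_psectionD].
by case: j => n; [apply: SMn | rewrite NegzE mulrNz; apply/max_psectionN/SMn].
Qed.

Lemma max_psection_ext e :
  (forall j, (exists s, S s /\ cpr s = cpr e *~ j) -> S (e *~ j)) -> S e.
Proof.
move=> e_mult; apply: contrapT => Se_out.
pose B : set cext := fun y => exists s j, S s /\ y = s + e *~ j.
apply: (S_max (B := B)).
  split=> [y Sy|BS]; first by exists y, 0; rewrite mulr0z addr0.
  apply/Se_out/BS; exists 0, 1; rewrite add0r mulr1z; split=> //.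
  exact: max_psection0.
split=> [_ _ [s1 [j1 [S1 ->]]] [s2 [j2 [S2 ->]]]|_ [s [j [Ss ->]]] y0].
  exists (s1 - s2), (j1 - j2); split; first exact: max_psectionB.
  by rewrite mulrzBr opprD addrACA.
have hits_j : exists s', S s' /\ cpr s' = cpr e *~ j.
  exists (- s); split; first exact: max_psectionN.
  by apply/eqP; rewrite cprN eq_sym -addr_eq0 addrC -cprMz -cprD y0.
exact: (proj2 S_psec) (max_psectionD Ss (e_mult j hits_j)) y0.
Qed.

Lemma max_psection_lift g : exists e, cpr e = g /\
  forall j, (exists s, S s /\ cpr s = g *~ j) -> S (e *~ j).
Proof.
pose hits j := exists s, S s /\ cpr s = g *~ j.
have [[j [j_neq0 hits_j]]|no_hits] := pselect (exists j, j != 0 /\ hits j); last first.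
  exists (clift g); split=> [|j hits_j]; first exact: cpr_clift.
  have [->|j_neq0] := eqVneq j 0; first by rewrite mulr0z; apply: max_psection0.
  by case: no_hits; exists j.
have: exists d : nat, (0 < d)%N && `[< hits d >].
  exists `|j|%N; rewrite absz_gt0 j_neq0; apply/asboolP.
  have [s [Ss s_g]] := hits_j; have [j_gt0|j_le0] := ltP 0 j.
    by exists s; rewrite gtz0_abs.
  exists (- s); split; first exact: max_psectionN.
  by rewrite cprN s_g lez0_abs // mulrNz.
case/ex_minnP => d /andP[d_gt0 /asboolP[sd [Ssd sd_g]]] d_min.
have [e [e_g e_d]] := cext_root d_gt0 sd_g.
exists e; split=> // k [s [Ss s_g]].
have k_div := divz_eq k d; set q := (k %/ d)%Z in k_div; set r := (k %% d)%Z in k_div.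
have r0 : r = 0.
  have r_ge0 : 0 <= r by apply: modz_ge0; rewrite eqz_nat -lt0n.
  have hits_r : hits r.
    exists (s - sd *~ q); split; first exact/max_psectionB/max_psectionMz.
    by rewrite cprD cprN cprMz s_g sd_g -mulrzA -mulrzBr k_div mulrC addrAC subrr add0r.
  apply: contrapT => r_neq0; have: (d <= `|r|)%N.
    apply: d_min; rewrite absz_gt0 gez0_abs //.
    by apply/andP; split; [apply/eqP | apply/asboolP].
  by rewrite leqNgt -ltz_nat gez0_abs // ltz_pmod // ltz_nat.
by rewrite k_div r0 addr0 mulrC mulrzA e_d; apply: max_psectionMz.
Qed.

Lemma max_psection_surj g : exists y, S y /\ cpr y = g.
Proof.
have [e [e_g e_mult]] := max_psection_lift g.
by exists e; split=> //; apply: max_psection_ext; rewrite e_g.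
Qed.

End MaximalPartialSection.

Lemma symmetric_cocycle_split : exists phi : G -> C,
  [/\ forall g, phi g != 0, phi 0 = 1 & forall g h, phi (g + h) = c g h * phi g * phi h].
Proof.
have [S [S_psec S_max]] := Zorn_bigcup psection_bigcup.
pose y g := sval (cid (max_psection_surj S_psec S_max g)).
have [yS y_g] : (forall g, S (y g)) /\ (forall g, cpr (y g) = g).
  by split=> g; case: (svalP (cid (max_psection_surj S_psec S_max g))).
have phiD g h : csc (y (g + h)) = c g h * csc (y g) * csc (y h).
  have y_cocycle : y g + y h - y (g + h) = 0.
    apply: (proj2 S_psec).
      by apply: (max_psectionB S_psec) (yS _); apply: (max_psectionD S_psec S_max).
    by rewrite cprD cprN cprD !y_g subrr.
  by move/eqP: y_cocycle; rewrite subr_eq0 => /eqP <-; rewrite cscD !y_g mulrC mulrA.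
exists (fun g => csc (y g)); split=> //; first by move=> g; apply: csc_neq0.
have := phiD 0 0; rewrite addr0 c0 mul1r => phi00.
by apply: (mulfI (csc_neq0 (y 0))); rewrite mulr1 -phi00.
Qed.

End CocycleSplitting.

Section FusionRigidity.
Variables (G : zmodType) (V : lmodType C) (Y Ybar : V -> int -> V -> V) (one omega : V).
Variable Vg : G -> V -> Prop.
Hypotheses (HsY : simple_VOA Y one omega) (HG : graded_by Y omega Vg).
Hypothesis Vg_neq0 : forall g : G, exists v, Vg g v /\ v <> 0.
Hypothesis fusion : forall g h k : G,
  fusion_rule Y omega (Vg 0) (Vg g) (Vg h) (Vg k) (if g + h == k then 1%N else 0%N).
Hypothesis HsYbar : simple_VOA Ybar one omega.
Hypothesis YbarY_0 : forall u, Vg 0 u -> forall (n : int) (v : V), Ybar u n v = Y u n v.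

Let HY := proj1 HsY.
Let HYbar := proj1 HsYbar.
Local Notation proj := (gproj HG).

Lemma vacuum_graded0 : Vg 0 one.
Proof.
apply: (homog_gproj (HG := HG)) => g g_neq0; have [v [v_0 v_neq0]] := Vg_neq0 0.
apply: contrapT => /(simple_VOA_Y_neq0 HsY)/(_ v_neq0)[n]; apply.
rewrite -(gproj_Yr0 HG HY) // (Y_vacuum HY); case: eqP => _; last exact: gproj0.
by rewrite (gproj_homog HG v_0) (negbTE g_neq0).
Qed.

Lemma Ybar_graded g h u v n : Vg g u -> Vg h v -> Vg (g + h) (Ybar u n v).
Proof.
move=> u_g v_h; apply: (homog_gproj (HG := HG)) => k k_neq; rewrite eq_sym in k_neq.
have := fusion g h k; rewrite (negbTE k_neq) => fus0.
have := fusion_rule0_vanish fus0 (projected_modes_intertwining HG HY HYbar YbarY_0 g h k).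
by move=> /(_ u n%:~R v u_g v_h); rewrite int_modeE.
Qed.

Lemma Ybar_proportional g h : exists a : C, a != 0 /\
  forall u v n, Vg g u -> Vg h v -> Ybar u n v = a *: Y u n v.
Proof.
have [u [u_g u_neq0]] := Vg_neq0 g; have [v [v_h v_neq0]] := Vg_neq0 h.
have [n /eqP Yuv_neq0] := simple_VOA_Y_neq0 HsY u_neq0 v_neq0.
have [n' Ybaruv_neq0] := simple_VOA_Y_neq0 HsYbar u_neq0 v_neq0.
have := fusion g h (g + h); rewrite eqxx => fus1.
have IY := projected_modes_intertwining HG HY HY (fun _ _ _ _ => erefl) g h (g + h).
have IYbar := projected_modes_intertwining HG HY HYbar YbarY_0 g h (g + h).
have projE X u' n'' v' : Vg (g + h) (X u' n'' v') ->
    proj (g + h) (int_mode X u' n''%:~R v') = X u' n'' v'.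
  by move=> X_gh; rewrite int_modeE (gproj_homog HG X_gh) eqxx.
have [|a Ybar_a] := fusion_rule1_proportional fus1 IY IYbar u_g v_h (p := n%:~R).
  by rewrite /= projE //; apply: (graded_Y HG).
have {}Ybar_a u' v' n'' : Vg g u' -> Vg h v' -> Ybar u' n'' v' = a *: Y u' n'' v'.
  move=> u'_g v'_h; move: (Ybar_a u' n''%:~R v' u'_g v'_h) => /=.
  by rewrite !projE //; [apply: (graded_Y HG) | apply: Ybar_graded].
exists a; split; last exact: Ybar_a.
by apply/negP => /eqP a0; apply: Ybaruv_neq0; rewrite Ybar_a // a0 scale0r.
Qed.

Definition twist g h : C := sval (cid (Ybar_proportional g h)).

Lemma twist_neq0 g h : twist g h != 0.
Proof. exact: (proj1 (svalP (cid (Ybar_proportional g h)))). Qed.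

Lemma YbarE g h u v n : Vg g u -> Vg h v -> Ybar u n v = twist g h *: Y u n v.
Proof. exact: (proj2 (svalP (cid (Ybar_proportional g h)))). Qed.

Lemma twist0 g : twist g 0 = 1.
Proof.
have [u [u_g /eqP u_neq0]] := Vg_neq0 g.
apply: (scalerIl u_neq0); rewrite /= scale1r.
by rewrite -{1}(Y_creation HY u) -(YbarE _ u_g vacuum_graded0) (Y_creation HYbar).
Qed.

Lemma twistC g h : twist g h = twist h g.
Proof.
have [u [u_g u_neq0]] := Vg_neq0 g; have [w [w_h w_neq0]] := Vg_neq0 h.
have [n /eqP Ywu_neq0] := simple_VOA_Y_neq0 HsY w_neq0 u_neq0.
have [N uw0] := Y_trunc HY u w.
have uw0Y i : (`|N - n|.+1 <= i)%N -> Y u (n + 1 + i%:Z) w = 0.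
  by move=> ?; apply: uw0; lia.
have uw0Ybar i : (`|N - n|.+1 <= i)%N -> Ybar u (n + 1 + i%:Z) w = 0.
  by move=> /uw0Y uw0i; rewrite (YbarE _ u_g w_h) uw0i scaler0.
move: (Y_skew HYbar (ltn0Sn _) uw0Ybar).
under eq_bigr do rewrite (YbarE _ u_g w_h) (YZl HYbar)
  (YbarE _ (graded_Y HG _ u_g w_h) vacuum_graded0) twist0 scale1r scalerA mulrC -scalerA.
rewrite -scaler_sumr (Y_skew HY (ltn0Sn _) uw0Y) (YbarE _ u_g w_h) (YbarE _ w_h u_g).
rewrite scalerBr => /addrI/oppr_inj; rewrite !scalerA [_ * twist h g]mulrC -!scalerA.
apply: scalerIl; rewrite scaler_eq0 negb_or Ywu_neq0 andbT.
by rewrite expfz_eq0 oppr_eq0 oner_eq0 andbF.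
Qed.

Lemma twist_cocycle g h l :
  twist g h * twist (g + h) l = twist h l * twist g (h + l).
Proof.
have [u [u_g u_neq0]] := Vg_neq0 g; have [v [v_h v_neq0]] := Vg_neq0 h.
have [w [w_l w_neq0]] := Vg_neq0 l.
have [n1 /eqP Yuv_neq0] := simple_VOA_Y_neq0 HsY u_neq0 v_neq0.
(* The top nonzero mode [n0] of [(u, v)] reduces the associativity formula for
   [(u_n0 v)_j w] to one term on the left in both structures. *)
have [n0 [/eqP Yuv0_neq0 uv0]] := Y_max_mode HY Yuv_neq0.
have [j /eqP Yuvw_neq0] := simple_VOA_Y_neq0 HsY Yuv0_neq0 w_neq0.
have [Nuw uw0] := Y_trunc HY u w; pose M := `|Nuw|%N; pose k := j - M%:Z.
have [Nvw vw0] := Y_trunc HY v w; pose L := `|Nvw - k|.+1.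
have uw0Y i : Y u (M%:Z + i%:Z) w = 0 by apply: uw0; lia.
have vw0Y i : (L <= i)%N -> Y v (k + i%:Z) w = 0 by move=> ?; apply: vw0; lia.
have uw0Ybar i : Ybar u (M%:Z + i%:Z) w = 0.
  by rewrite (YbarE _ u_g w_l) uw0Y scaler0.
have uv0Ybar i : (0 < i)%N -> Ybar u (n0 + i%:Z) v = 0.
  by move=> /uv0 uv0i; rewrite (YbarE _ u_g v_h) uv0i scaler0.
have vw0Ybar i : (L <= i)%N -> Ybar v (k + i%:Z) w = 0.
  by move=> /vw0Y vw0i; rewrite (YbarE _ v_h w_l) vw0i scaler0.
move: (Y_assoc HYbar (ltn0Sn _) uw0Ybar uv0Ybar vw0Ybar).
rewrite (YbarE _ u_g v_h) (YZl HYbar) (YbarE _ (graded_Y HG _ u_g v_h) w_l) scalerA.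
under eq_bigr do rewrite (YbarE _ v_h w_l) (YZr HYbar)
  (YbarE _ u_g (graded_Y HG _ v_h w_l)) !scalerA -mulrA mulrC -scalerA.
rewrite -scaler_sumr -(Y_assoc HY (ltn0Sn _) uw0Y uv0 vw0Y); apply: scalerIl.
by rewrite (_ : M%:Z + k = j) //; lia.
Qed.

Lemma Ybar_twist_coboundary : exists phi : G -> C,
  [/\ forall g, phi g != 0, phi 0 = 1 &
      forall g h u v n, Vg g u -> Vg h v ->
        phi g * phi h *: Ybar u n v = phi (g + h) *: Y u n v].
Proof.
have [phi [phi_neq0 phi0 phiD]] :=
  symmetric_cocycle_split twist_neq0 twist0 twistC twist_cocycle.
exists phi; split=> // g h u v n u_g v_h.
by rewrite (YbarE _ u_g v_h) scalerA phiD mulrC mulrA.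
Qed.

End FusionRigidity.

Theorem proposition5p3 (G : zmodType) (V : lmodType C)
    (Y Ybar : V -> int -> V -> V) (one omega : V) (Vg : G -> V -> Prop) :
  simple_VOA Y one omega ->
  graded_by Y omega Vg ->
  (forall g : G, exists v, Vg g v /\ v <> 0) ->
  (forall g h k : G,
      fusion_rule Y omega (Vg 0) (Vg g) (Vg h) (Vg k)
        (if g + h == k then 1%N else 0%N)) ->
  simple_VOA Ybar one omega ->
  (forall u, Vg 0 u -> forall (n : int) (v : V), Ybar u n v = Y u n v) ->
  VOA_isomorphic Y Ybar one omega.
Proof.
move=> HsY HG Vg_neq0 fusion HsYbar YbarY_0.
have [phi [phi_neq0 phi0 phiYbar]] :=
  Ybar_twist_coboundary HsY HG Vg_neq0 fusion HsYbar YbarY_0.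
exact: (graded_rescale_iso HG (proj1 HsY) (proj1 HsYbar)
  (vacuum_graded0 HsY HG Vg_neq0) phi_neq0 phi0 phiYbar).
Qed.
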